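(* Let $\mathbb{F}\in\{\mathbb{R},\mathbb{C}\}$, let $N\ge 2$, $M\ge 2$ and $1\le Q\le M$ be integers, write $\mathcal{M}=\{1,\dots,M\}$, let $0\le\epsilon\le 1$, and let $\mathbf{H}_1,\dots,\mathbf{H}_M$ be $N\times N$ positive semidefinite matrices (real symmetric if $\mathbb{F}=\mathbb{R}$, complex Hermitian if $\mathbb{F}=\mathbb{C}$). Consider the problem (SDP1): minimize $\mathrm{Tr}[\mathbf{X}^{(2)}]$ over a real symmetric $(M+1)\times(M+1)$ matrix $\mathbf{X}^{(1)}$ and an $N\times N$ matrix $\mathbf{X}^{(2)}$ (real symmetric if $\mathbb{F}=\mathbb{R}$, Hermitian if $\mathbb{F}=\mathbb{C}$) subject to $\mathrm{Tr}[\mathbf{H}_i\mathbf{X}^{(2)}]\ge \frac{1+\mathbf{X}^{(1)}[i,M+1]}{2}+\frac{1-\mathbf{X}^{(1)}[i,M+1]}{2}\,\epsilon$ for all $i\in\mathcal{M}$, $\sum_{i\in\mathcal{M}}\mathbf{X}^{(1)}[i,M+1]=2Q-M$, $\mathbf{X}^{(1)}[i,i]=1$ for $i=1,\dots,M+1$, $\mathbf{X}^{(1)}\succeq 0$, $\mathbf{X}^{(2)}\succeq 0$. Consider also the problem (SDP2): minimize $\mathrm{Tr}[\mathbf{X}^{(2)}]$ over $\boldsymbol{\beta}=(\beta_1,\dots,\beta_M)^T\in\mathbb{R}^M$ and an $N\times N$ matrix $\mathbf{X}^{(2)}$ (real symmetric if $\mathbb{F}=\mathbb{R}$, Hermitian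 if $\mathbb{F}=\mathbb{C}$) subject to $\mathrm{Tr}[\mathbf{H}_i\mathbf{X}^{(2)}]\ge \beta_i+(1-\beta_i)\epsilon$ for all $i\in\mathcal{M}$, $\sum_{i\in\mathcal{M}}\beta_i=Q$, $0\le\beta_i\le 1$ for all $i\in\mathcal{M}$, $\mathbf{X}^{(2)}\succeq 0$. If $(\tilde{\mathbf{X}}^{(1)},\tilde{\mathbf{X}}^{(2)})$ is an optimal solution of (SDP1), then $(\tilde{\boldsymbol{\beta}},\tilde{\mathbf{X}}^{(2)})$ with $\tilde{\boldsymbol{\beta}}[i]=\frac12+\frac12\tilde{\mathbf{X}}^{(1)}[i,M+1]$, $i\in\mathcal{M}$, is an optimal solution of (SDP2). Conversely, if $(\bar{\boldsymbol{\beta}},\bar{\mathbf{X}}^{(2)})$ is an optimal solution of (SDP2), then there is a real symmetric matrix $\mathbf{X}^{(1)}$ with $\mathbf{X}^{(1)}[i,M+1]=2\bar{\boldsymbol{\beta}}[i]-1$ for all $i\in\mathcal{M}$ such that $(\mathbf{X}^{(1)},\bar{\mathbf{X}}^{(2)})$ is an optimal solution of (SDP1).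
   Context: $\mathbf{X}[i,j]$ denotes the $(i,j)$ entry of a matrix, $\mathbf{X}\succeq 0$ means positive semidefinite, and $\mathrm{Tr}$ is the trace. (SDP1) is the semidefinite relaxation of a lifted reformulation of the mixed binary problem ''minimize $\|\mathbf{w}\|^2$ over $\mathbf{w}\in\mathbb{F}^N$, $\boldsymbol\beta\in\{0,1\}^M$ subject to $\mathbf{w}^H\mathbf{H}_i\mathbf{w}\ge\beta_i+(1-\beta_i)\epsilon$, $\sum_i\beta_i=Q$'', in which the binary variables are encoded as $\alpha_i=2\beta_i-1\in\{-1,1\}$ together with an auxiliary variable $\ell\in\{-1,1\}$ occupying index $M+1$. *)

(* F in {R, C}: we work with matrices over C := R[i]
   (R : realType), and the case F = R is encoded by requiring all entries
   to be real (Num.real), via the boolean flag [realF]. *)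
From HB Require Import structures.
From mathcomp Require Import all_boot all_order all_algebra.
From mathcomp Require Import reals complex.
Set Implicit Arguments. Unset Strict Implicit. Unset Printing Implicit Defensive.
Import Order.TTheory GRing.Theory Num.Theory.
Local Open Scope ring_scope.

Section Defs.
Variable C : numClosedFieldType.

Definition ctrmx (m n : nat) (A : 'M[C]_(m, n)) : 'M[C]_(n, m) :=
  \matrix_(i, j) (A j i)^*.

Definition is_hermitian (n : nat) (A : 'M[C]_n) : Prop := ctrmx A = A.


Definition is_psd (n : nat) (A : 'M[C]_n) : Prop :=
  is_hermitian A /\ forall z : 'cV[C]_n, 0 <= (ctrmx z *m A *m z) 0 0.

Definition Fmx (realF : bool) (n : nat) (A : 'M[C]_n) : Prop :=
  is_hermitian A /\ (realF -> A \is a realmx).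

(* index i of M = {1..M} as a row index of an (M+1)x(M+1) matrix;
   ord_max is the index M+1 *)
Definition idxM (M : nat) (i : 'I_M) : 'I_M.+1 := widen_ord (leqnSn M) i.

Section Problems.
Variables (realF : bool) (N M Q : nat) (eps : C) (H : 'I_M -> 'M[C]_N).

Definition feasible1 (X1 : 'M[C]_M.+1) (X2 : 'M[C]_N) : Prop :=
  [/\ X1 \is a realmx, is_hermitian X1, Fmx realF X2, is_psd X1 & is_psd X2] /\
  [/\
      (forall i : 'I_M,
          \tr (H i *m X2) >= (1 + X1 (idxM i) ord_max) / 2
                             + (1 - X1 (idxM i) ord_max) / 2 * eps),
      \sum_(i < M) X1 (idxM i) ord_max = 2 * Q%:R - M%:R
      & (forall k : 'I_M.+1, X1 k k = 1)].

Definition optimal1 (X1 : 'M[C]_M.+1) (X2 : 'M[C]_N) : Prop :=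
  feasible1 X1 X2 /\
  forall Y1 Y2, feasible1 Y1 Y2 -> \tr X2 <= \tr Y2.

Definition feasible2 (beta : 'I_M -> C) (X2 : 'M[C]_N) : Prop :=
  [/\ (forall i, beta i \is Num.real), Fmx realF X2, is_psd X2 &
      (forall i, 0 <= beta i <= 1)] /\
  (forall i : 'I_M, \tr (H i *m X2) >= beta i + (1 - beta i) * eps) /\
  \sum_(i < M) beta i = Q%:R.

Definition optimal2 (beta : 'I_M -> C) (X2 : 'M[C]_N) : Prop :=
  feasible2 beta X2 /\
  forall beta' Y2, feasible2 beta' Y2 -> \tr X2 <= \tr Y2.

End Problems.
End Defs.

From HB Require Import structures.
From mathcomp Require Import all_boot all_order all_algebra.
From mathcomp Require Import reals complex.
From mathcomp Require Import ring.
Import Order.TTheory GRing.Theory Num.Theory.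
Local Open Scope ring_scope.
Set Implicit Arguments. Unset Strict Implicit.

(* Both relaxations have the objective Tr X2, so it suffices to map feasible
   points to feasible points with the same X2.  From (SDP1) to (SDP2): the
   principal 2x2 submatrix of X1 on {i, M+1} is positive semidefinite with unit
   diagonal, so X1[i, M+1] lies in [-1, 1] and beta_i = (1 + X1[i, M+1]) / 2
   lies in [0, 1].  From (SDP2) to (SDP1): for alpha = (2 beta - 1, 1) the matrix
   alpha alpha^T + diag(1 - alpha_k^2) is positive semidefinite (rank one plus a
   nonnegative diagonal), has unit diagonal, and its last column is alpha. *)

Section ConjugateTranspose.
Variable C : numClosedFieldType.

Lemma ctrmxE m n (A : 'M[C]_(m, n)) : ctrmx A = (map_mx Num.conj A)^T.
Proof. by apply/matrixP => i j; rewrite !mxE. Qed.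

Lemma ctrmxK m n (A : 'M[C]_(m, n)) : ctrmx (ctrmx A) = A.
Proof. by apply/matrixP => i j; rewrite 2!mxE conjCK. Qed.

Lemma ctrmxD m n (A B : 'M[C]_(m, n)) : ctrmx (A + B) = ctrmx A + ctrmx B.
Proof. by apply/matrixP => i j; rewrite !mxE rmorphD. Qed.

Lemma ctrmxZ m n (a : C) (A : 'M[C]_(m, n)) : ctrmx (a *: A) = a^* *: ctrmx A.
Proof. by apply/matrixP => i j; rewrite !mxE rmorphM. Qed.

Lemma ctrmx_mul m n p (A : 'M[C]_(m, n)) (B : 'M[C]_(n, p)) :
  ctrmx (A *m B) = ctrmx B *m ctrmx A.
Proof. by rewrite !ctrmxE map_mxM trmx_mul. Qed.

Lemma ctrmx_real m n (A : 'M[C]_(m, n)) : A \is a realmx -> ctrmx A = A^T.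
Proof. by move=> Ar; rewrite ctrmxE realmxC. Qed.

Lemma ctrmx_delta m n (i : 'I_m) (j : 'I_n) :
  ctrmx (delta_mx i j : 'M[C]_(m, n)) = delta_mx j i.
Proof. by rewrite ctrmxE map_delta_mx trmx_delta. Qed.

End ConjugateTranspose.

Section PositiveSemidefinite.
Variables (C : numClosedFieldType) (n : nat).
Implicit Types (A B : 'M[C]_n) (v : 'cV[C]_n).

Lemma delta_mul_delta_mx A (p q : 'I_n) :
  delta_mx 0 p *m A *m delta_mx q 0 = (A p q)%:M :> 'M[C]_1.
Proof. by rewrite -rowE -colE [LHS]mx11_scalar !mxE. Qed.

Lemma psd_pair_ge0 A (p q : 'I_n) (s : C) : is_psd A -> s \is Num.real ->
  0 <= A p p + s * (A p q + A q p) + s ^+ 2 * A q q.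
Proof.
move=> [_ Apsd] sR; have := Apsd (delta_mx p 0 + s *: delta_mx q 0).
rewrite ctrmxD ctrmxZ !ctrmx_delta conj_Creal //.
rewrite !(mulmxDl, mulmxDr, =^~ scalemxAl, =^~ scalemxAr) !delta_mul_delta_mx.
by rewrite !mxE eqxx !mulr1n; congr (0 <= _); ring.
Qed.

Lemma psd_add A B : is_psd A -> is_psd B -> is_psd (A + B).
Proof.
move=> [Ah Apsd] [Bh Bpsd]; split; first by rewrite /is_hermitian ctrmxD Ah Bh.
by move=> z; rewrite mulmxDr mulmxDl mxE addr_ge0.
Qed.

Lemma psd_outer v : is_psd (v *m ctrmx v).
Proof.
split; first by rewrite /is_hermitian ctrmx_mul ctrmxK.
move=> z; rewrite mulmxA -mulmxA.
have -> : ctrmx v *m z = ctrmx (ctrmx z *m v) by rewrite ctrmx_mul ctrmxK.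
set w := ctrmx z *m v.
by rewrite mxE big_ord1 [ctrmx w _ _]mxE mul_conjC_ge0.
Qed.

Lemma psd_diag (d : 'rV[C]_n) : (forall k, 0 <= d 0 k) -> is_psd (diag_mx d).
Proof.
move=> d_ge0; split.
  apply/matrixP => k l; rewrite !mxE eq_sym.
  by case: eqP => [->|_]; rewrite ?mulr1n ?conj_Creal ?ger0_real ?rmorph0.
move=> z; rewrite mul_mx_diag mxE; apply: sumr_ge0 => k _; rewrite !mxE.
by rewrite mulrAC mulr_ge0 // mulrC mul_conjC_ge0.
Qed.

End PositiveSemidefinite.

Lemma psd_unit_diag_entry_bound (C : numClosedFieldType) n (A : 'M[C]_n)
    (p q : 'I_n) :
  is_psd A -> A q p = A p q -> A p p = 1 -> A q q = 1 -> -1 <= A p q <= 1.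
Proof.
move=> Apsd Asym App Aqq.
have two_gt0 : (0 : C) < 2 by rewrite ltr0n.
have /(_ 1) := psd_pair_ge0 p q Apsd; rewrite rpred1 App Aqq Asym => /(_ isT).
have -> : 1 + 1 * (A p q + A p q) + 1 ^+ 2 * 1 = 2 * (A p q - -1) by ring.
rewrite pmulr_rge0 // subr_ge0 => ->.
have /(_ (-1)) := psd_pair_ge0 p q Apsd; rewrite rpredN rpred1 App Aqq Asym => /(_ isT).
have -> : 1 + -1 * (A p q + A p q) + (-1) ^+ 2 * 1 = 2 * (1 - A p q) by ring.
by rewrite pmulr_rge0 // subr_ge0.
Qed.

Section UnitDiagonalCompletion.
Variables (C : numClosedFieldType) (n : nat).

Definition unit_diag_completion (a : 'cV[C]_n) : 'M[C]_n :=
  a *m a^T + diag_mx (\row_k (1 - a k 0 ^+ 2)).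

Variable a : 'cV[C]_n.

Lemma unit_diag_completionE k l :
  unit_diag_completion a k l = a k 0 * a l 0 + (k == l)%:R * (1 - a k 0 ^+ 2).
Proof. by rewrite !mxE big_ord1 !mxE mulr_natl. Qed.

Lemma unit_diag_completion_diag k : unit_diag_completion a k k = 1.
Proof. by rewrite unit_diag_completionE eqxx mul1r addrC subrK. Qed.

Hypothesis a_real : a \is a realmx.

Lemma unit_diag_completion_real : unit_diag_completion a \is a realmx.
Proof.
apply/mxOverP => k l; have aR k' : a k' 0 \is Num.real by apply: (mxOverP a_real).
by rewrite unit_diag_completionE rpredD ?rpredM ?rpredB ?rpredX ?rpred_nat
   ?rpred1 ?aR.
Qed.

Lemma unit_diag_completion_psd :
  (forall k, a k 0 ^+ 2 <= 1) -> is_psd (unit_diag_completion a).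
Proof.
move=> a_le1; apply: psd_add; first by rewrite -ctrmx_real //; apply: psd_outer.
by apply: psd_diag => k; rewrite mxE subr_ge0.
Qed.

End UnitDiagonalCompletion.

Lemma idxM_lift M (i : 'I_M) : idxM i = lift ord_max i.
Proof. by apply: val_inj; rewrite /= /bump leqNgt ltn_ord. Qed.

Section Relaxations.
Variables (C : numClosedFieldType) (realF : bool) (N M Q : nat) (eps : C).
Variable H : 'I_M -> 'M[C]_N.

Lemma feasible1_feasible2 X1 X2 : feasible1 realF Q eps H X1 X2 ->
  feasible2 realF Q eps H (fun i => 1 / 2 + 1 / 2 * X1 (idxM i) ord_max) X2.
Proof.
move=> [[X1R X1h X2F X1psd X2psd] [X2tr X1sum X1diag]].
have X1_entry_real k l : X1 k l \is Num.real by apply/mxOverP.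
have X1sym i : X1 ord_max (idxM i) = X1 (idxM i) ord_max.
  by rewrite -{1}X1h mxE conj_Creal.
have two_neq0 : (2 : C) != 0 by rewrite pnatr_eq0.
have halfR : (1 / 2 : C) \is Num.real by rewrite rpredM ?rpred1 ?rpredV ?rpred_nat.
split; [split=> // i | split=> [i|]].
- exact: rpredD halfR (rpredM halfR (X1_entry_real _ _)).
- set x := X1 (idxM i) ord_max.
  have /andP[x_ge x_le] :=
    psd_unit_diag_entry_bound X1psd (X1sym i) (X1diag _) (X1diag _).
  apply/andP; split.
    have -> : 1 / 2 + 1 / 2 * x = (x - -1) / 2 by field.
    by rewrite divr_ge0 ?ler0n ?subr_ge0.
  rewrite -subr_ge0; have -> : 1 - (1 / 2 + 1 / 2 * x) = (1 - x) / 2 by field.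
  by rewrite divr_ge0 ?ler0n ?subr_ge0.
- set x := X1 (idxM i) ord_max.
  have -> : 1 / 2 + 1 / 2 * x + (1 - (1 / 2 + 1 / 2 * x)) * eps
            = (1 + x) / 2 + (1 - x) / 2 * eps by field.
  exact: X2tr.
- by rewrite big_split /= sumr_const card_ord -mulr_sumr X1sum -mulr_natr; field.
Qed.

Definition lifted_alpha (beta : 'I_M -> C) : 'cV[C]_M.+1 :=
  \col_k (if unlift ord_max k is Some i then 2 * beta i - 1 else 1).

Lemma lifted_completion_last_col beta i :
  unit_diag_completion (lifted_alpha beta) (idxM i) ord_max = 2 * beta i - 1.
Proof.
have idxM_neq : idxM i != ord_max by rewrite -(inj_eq val_inj) /= neq_ltn ltn_ord.
rewrite unit_diag_completionE (negbTE idxM_neq) mul0r addr0 !mxE.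
by rewrite idxM_lift liftK unlift_none mulr1.
Qed.

Lemma feasible2_lifted_feasible1 beta X2 : feasible2 realF Q eps H beta X2 ->
  feasible1 realF Q eps H (unit_diag_completion (lifted_alpha beta)) X2.
Proof.
move=> [[betaR X2F X2psd beta01] [X2tr beta_sum]].
have alphaR : lifted_alpha beta \is a realmx.
  apply/mxOverP => k l; rewrite mxE; case: unlift => [i|]; last exact: rpred1.
  by rewrite rpredB ?rpred1 // rpredM ?betaR ?rpred_nat.
have alpha_sq_le1 k : lifted_alpha beta k 0 ^+ 2 <= 1.
  rewrite mxE -subr_ge0; case: unlift => [i|]; last by rewrite expr1n subrr.
  have /andP[beta_ge0 beta_le1] := beta01 i.
  have -> : 1 - (2 * beta i - 1) ^+ 2 = 4 * (beta i * (1 - beta i)) by ring.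
  by rewrite !mulr_ge0 ?ler0n ?subr_ge0.
split; split.
- exact: unit_diag_completion_real.
- by case: (unit_diag_completion_psd alphaR alpha_sq_le1).
- exact: X2F.
- exact: unit_diag_completion_psd.
- exact: X2psd.
- move=> i; rewrite lifted_completion_last_col.
  have -> : (1 + (2 * beta i - 1)) / 2 + (1 - (2 * beta i - 1)) / 2 * eps
            = beta i + (1 - beta i) * eps by field.
  exact: X2tr.
- under eq_bigr => i _ do rewrite lifted_completion_last_col.
  by rewrite sumrB -mulr_sumr beta_sum sumr_const card_ord.
- exact: unit_diag_completion_diag.
Qed.
End Relaxations.

Theorem lemma2p1 (R : realType) (realF : bool) (N M Q : nat) (eps : R[i])
    (H : 'I_M -> 'M[R[i]]_N) :
  (2 <= N)%N -> (2 <= M)%N -> (1 <= Q <= M)%N ->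
  eps \is Num.real -> 0 <= eps <= 1 ->
  (forall i, Fmx realF (H i) /\ is_psd (H i)) ->
  (forall (X1 : 'M[R[i]]_M.+1) (X2 : 'M[R[i]]_N),
      optimal1 realF Q eps H X1 X2 ->
      optimal2 realF Q eps H (fun i => 1 / 2 + 1 / 2 * X1 (idxM i) ord_max) X2)
  /\
  (forall (beta : 'I_M -> R[i]) (X2 : 'M[R[i]]_N),
      optimal2 realF Q eps H beta X2 ->
      exists X1 : 'M[R[i]]_M.+1,
        [/\ X1 \is a realmx, is_hermitian X1,
            (forall i : 'I_M, X1 (idxM i) ord_max = 2 * beta i - 1) &
            optimal1 realF Q eps H X1 X2]).
Proof.
move=> _ _ _ _ _ _; split.
- move=> X1 X2 [X_feas X_opt]; split; first exact: feasible1_feasible2.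
  by move=> beta Y2 /feasible2_lifted_feasible1; apply: X_opt.
- move=> beta X2 [X_feas X_opt].
  have X1_feas := feasible2_lifted_feasible1 X_feas.
  have [[X1R X1h _ _ _] _] := X1_feas.
  exists (unit_diag_completion (lifted_alpha beta)); split=> //.
    exact: lifted_completion_last_col.
  by split=> // Y1 Y2 /feasible1_feasible2; apply: X_opt.
Qed.
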